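(* Let $r \in \mathbb{N}$ with $r\ge 2$. (1) $k_{\mathsf{D}}(C_2^r) = \min \{k \in \mathbb{N} \colon \mathsf{D}_0(C_2^r) = \mathsf{D}_k(C_2^r) - 2k \}$. (2) If $B$ is a zero-sum sequence over $C_2^r$ with $\max\mathsf{L}(B)\le k_{\mathsf{D}}(C_2^r)$ and $|B| = \mathsf{D}_{k_{\mathsf{D}}(C_2^r)}(C_2^r)$, then $B$ is squarefree and $0$ does not occur in $B$. In particular, $k_{\mathsf{D}}(C_2^r) \le \lfloor (2^r-1)/3 \rfloor$.
   Context: $C_2^r$ is the elementary abelian $2$-group of rank $r$. A sequence over a finite abelian group $G$ is a finite unordered list of elements with repetitions; it is squarefree if no element occurs more than once; zero-sum means its terms sum to $0$; a minimal zero-sum sequence is a non-empty zero-sum sequence with no proper non-empty zero-sum subsequence; for a zero-sum sequence $B$, $\mathsf{L}(B)$ is the set of all $t$ such that $B$ is a product of $t$ minimal zero-sum sequences. $\mathsf{D}_k(G)$ is the smallest $\ell$ such that every sequence over $G$ of length at least $\ell$ has $k$ disjoint non-empty zero-sum subsequences. $\mathsf{D}_0(G)\in\mathbb{N}_0$ is the (known to exist) integer with $\mathsf{D}_k(G)=\mathsf{D}_0(G)+k\exp(G)$ for all sufficiently large $k$, and $k_{\mathsf{D}}(G)$ is the minimal $k_0\in\mathbb{N}$ with $\mathsf{D}_k(G)=\mathsf{D}_0(G)+k\exp(G)$ for all $k\ge k_0$. *)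

From HB Require Import structures.
From mathcomp Require Import all_boot all_order all_algebra.
From mathcomp Require Import boolp.
Set Implicit Arguments. Unset Strict Implicit. Unset Printing Implicit Defensive.
Import GRing.Theory.
Local Open Scope ring_scope.

(* least natural number satisfying P (0 if none exists) *)
Definition cmin (P : nat -> Prop) : nat :=
  match pselect (exists n, P n) with
  | left H =>
      @ex_minn (fun n => `[< P n >])
        (let: ex_intro n Hn := H in ex_intro _ n (asboolT Hn))
  | right _ => 0%N
  end.

Definition C2 (r : nat) := 'rV['F_2]_r.

Section Seqs.
Variable G : zmodType.

(* sequences over G are (unordered) lists: seq G, compared up to perm_eq *)
Definition zero_sum (s : seq G) : bool := \sum_(x <- s) x == 0.

Definition minimal_zero_sum (s : seq G) : Prop :=
  s != [::] /\ zero_sum s /\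
  forall m : bitseq, mask m s != [::] -> zero_sum (mask m s) ->
    size (mask m s) = size s.

Definition in_L (B : seq G) (t : nat) : Prop :=
  exists ss : seq (seq G), size ss = t /\
    (forall u, u \in ss -> minimal_zero_sum u) /\ perm_eq B (flatten ss).

Definition has_k_disjoint_zs (k : nat) (s : seq G) : Prop :=
  exists ss : seq (seq G), size ss = k /\
    (forall u, u \in ss -> u != [::] /\ zero_sum u) /\
    exists rest : seq G, perm_eq s (flatten ss ++ rest).

Definition Dk (k : nat) : nat :=
  cmin (fun l => forall s : seq G, (l <= size s)%N -> has_k_disjoint_zs k s).

Definition zexp : nat :=
  cmin (fun n => (0 < n)%N /\ forall x : G, x *+ n = 0).

Definition D0 : nat :=
  cmin (fun d => exists K, forall k, (K <= k)%N -> Dk k = (d + k * zexp)%N).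

Definition kD : nat :=
  cmin (fun k0 => (0 < k0)%N /\ forall k, (k0 <= k)%N -> Dk k = (D0 + k * zexp)%N).
End Seqs.

From mathcomp Require Import all_boot all_order all_algebra.
From mathcomp Require Import zify boolp.
Set Implicit Arguments. Unset Strict Implicit. Unset Printing Implicit Defensive.
Import GRing.Theory.
Local Open Scope ring_scope.

(* In C_2^r, a repeated pair g, g is a zero-sum block, and deleting it from a
   sequence with k+1 disjoint zero-sum subsequences leaves k of them (the two
   blocks containing g merge).  Hence D_{k+1} >= D_k + 2, while pigeonholing
   pairs gives D_k <= 2k + 2^r.  So D_k - 2k is nondecreasing and bounded,
   eventually equal to D_0, and k_D is the first k where it reaches D_0; in
   particular D_{k_D} >= D_{k_D - 1} + 3.  If B has length D_{k_D} and
   contains 0 or a repeated pair, removing that block leaves more than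
   D_{k_D - 1} elements, which split into k_D zero-sum pieces, so max L(B) >
   k_D.  For the bound, append its sum to an extremal sequence of length
   D_{k_D} - 1: the result has max L <= k_D, hence is squarefree and 0-free,
   and its k_D disjoint zero-sum blocks each have at least 3 elements. *)

Lemma cmin_spec (P : nat -> Prop) : (exists n, P n) ->
  P (cmin P) /\ forall m, P m -> (cmin P <= m)%N.
Proof.
rewrite /cmin; case: pselect => // exP _.
case: ex_minnP => n /asboolP Pn n_min; split=> // m Pm.
by apply: n_min; apply/asboolP.
Qed.

Lemma cmin_uniq (P : nat -> Prop) d : P d -> (forall e, P e -> e = d) -> cmin P = d.
Proof. by move=> Pd P_uniq; apply: P_uniq; have [] := cmin_spec (ex_intro _ d Pd). Qed.

Lemma perm_dup (T : eqType) (s : seq T) :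
  ~~ uniq s -> exists x s', perm_eq s (x :: x :: s').
Proof.
elim: s => [|x s IH] //=; rewrite negb_and negbK => /orP [xs | /IH [y [s' s_perm]]].
  by exists x, (rem x s); rewrite perm_cons; apply: perm_to_rem.
exists y, (x :: s'); rewrite -(perm_cons x) in s_perm; apply: (perm_trans s_perm).
by rewrite perm_sym -[y :: y :: x :: s']/([:: y; y] ++ [:: x] ++ s') perm_catCA.
Qed.

Lemma uniq_flatten_mem (T : eqType) (ss : seq (seq T)) u :
  uniq (flatten ss) -> u \in ss -> uniq u.
Proof.
elim: ss => [|v ss IH] //=; rewrite cat_uniq => /and3P [v_uniq _ ss_uniq].
by rewrite inE => /orP [/eqP -> | /IH]; [|apply].
Qed.

Lemma leq_size_flatten (T : eqType) n (ss : seq (seq T)) :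
  (forall u, u \in ss -> n <= size u)%N -> (n * size ss <= size (flatten ss))%N.
Proof.
elim: ss => [|v ss IH] n_le; first by rewrite muln0.
rewrite /= size_cat mulnS leq_add ?n_le ?mem_head // IH // => u u_ss.
by apply: n_le; rewrite inE u_ss orbT.
Qed.

Lemma nondecreasing_bounded_stationary (f : nat -> nat) M :
  (forall k, f k <= f k.+1)%N -> (forall k, f k <= M)%N ->
  exists K, forall k, (K <= k)%N -> f k = f K.
Proof.
move=> f_incr f_bounded.
have f_mono : {homo f : i j / (i <= j)%N} by apply: homo_leq leqnn leq_trans f_incr.
have attained : exists v, `[< exists k, f k = v >] by exists (f 0); apply/asboolP; exists 0.
have bounded v : `[< exists k, f k = v >] -> (v <= M)%N by move=> /asboolP [k <-].
case: (ex_maxnP attained bounded) => v /asboolP [K fK] v_max; exists K => k Kk.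
apply/eqP; rewrite eqn_leq (f_mono _ _ Kk) andbT fK.
by apply: v_max; apply/asboolP; exists k.
Qed.

Section ZeroSumSequences.
Variable G : zmodType.
Implicit Types s u w rest : seq G.

Lemma zero_sum_perm s t : perm_eq s t -> zero_sum s = zero_sum t.
Proof. by move=> st; rewrite /zero_sum (perm_big _ st). Qed.

Lemma zero_sum_cat s t : zero_sum s -> zero_sum t -> zero_sum (s ++ t).
Proof. by rewrite /zero_sum big_cat /= => /eqP -> /eqP ->; rewrite addr0. Qed.

Lemma zero_sum_complement s w t :
  perm_eq s (w ++ t) -> zero_sum s -> zero_sum w -> zero_sum t.
Proof.
move=> /zero_sum_perm ->; rewrite /zero_sum big_cat /= => /eqP + /eqP w0.
by rewrite w0 add0r => ->.
Qed.

Lemma zero_sum_flatten (ss : seq (seq G)) :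
  (forall u, u \in ss -> zero_sum u) -> zero_sum (flatten ss).
Proof.
elim: ss => [|u ss IH] ss_zs /=; first by rewrite /zero_sum big_nil.
apply: zero_sum_cat; first by rewrite ss_zs ?mem_head.
by apply: IH => v v_ss; rewrite ss_zs // inE v_ss orbT.
Qed.

Lemma zero_sum_pair (g : G) : g + g = 0 -> zero_sum [:: g; g].
Proof. by rewrite /zero_sum !big_cons big_nil addr0 => ->. Qed.

Lemma zero_sum1 : zero_sum [:: 0 : G].
Proof. by rewrite /zero_sum big_cons big_nil addr0. Qed.

Lemma perm_mask_cat (m : bitseq) s : exists rest, perm_eq s (mask m s ++ rest).
Proof.
elim: s m => [|x s IH] [|[] m] /=; try by exists [::].
- by exists (x :: s).
- by have [rest s_perm] := IH m; exists rest; rewrite perm_cons.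
have [rest s_perm] := IH m; exists (x :: rest).
by rewrite perm_sym -cat1s perm_catCA /= perm_cons perm_sym.
Qed.

Lemma minimal_zero_sum_factorization u : u != [::] -> zero_sum u ->
  exists fs : seq (seq G), (0 < size fs)%N /\
    (forall v, v \in fs -> minimal_zero_sum v) /\ perm_eq u (flatten fs).
Proof.
elim: {u}_.+1 {-2}u (ltnSn (size u)) => // n IH u u_small u_nil u_zs.
have [u_min | u_not_min] := pselect (minimal_zero_sum u).
  by exists [:: u]; rewrite /= cats0; split=> //; split=> // v; rewrite inE => /eqP ->.
have [m /not_implyP [m_nil /not_implyP [m_zs m_size]]] : exists m : bitseq,
    ~ (mask m u != [::] -> zero_sum (mask m u) -> size (mask m u) = size u).
  by apply/existsNP => m_all; apply: u_not_min.
have [rest u_perm] := perm_mask_cat m u.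
have u_size := perm_size u_perm; rewrite size_cat in u_size.
have rest_nil : rest != [::].
  by apply: contra_notN m_size => /eqP rest0; rewrite u_size rest0 addn0.
have rest_zs : zero_sum rest by apply: zero_sum_complement u_perm u_zs m_zs.
have mask_lt : (size (mask m u) < n)%N.
  rewrite -ltnS; apply: leq_trans u_small; rewrite ltnS u_size.
  by rewrite -[X in (X < _)%N]addn0 ltn_add2l lt0n size_eq0.
have rest_lt : (size rest < n)%N.
  rewrite -ltnS; apply: leq_trans u_small; rewrite ltnS u_size.
  by rewrite -[X in (X < _)%N]add0n ltn_add2r lt0n size_eq0.
have [f1 [f1_pos [f1_min f1_perm]]] := IH (mask m u) mask_lt m_nil m_zs.
have [f2 [_ [f2_min f2_perm]]] := IH rest rest_lt rest_nil rest_zs.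
exists (f1 ++ f2); rewrite size_cat flatten_cat; split; first lia.
split; first by move=> v; rewrite mem_cat => /orP [/f1_min | /f2_min].
by apply: (perm_trans u_perm); apply: perm_cat.
Qed.

Lemma in_L_flatten (ss : seq (seq G)) B : perm_eq B (flatten ss) ->
  (forall u, u \in ss -> u != [::] /\ zero_sum u) ->
  exists t, (size ss <= t)%N /\ in_L B t.
Proof.
elim: ss B => [|u ss IH] B B_perm ss_zs.
  by exists 0%N; split=> //; exists [::].
have [u_nil u_zs] := ss_zs u (mem_head _ _).
have [fs [fs_pos [fs_min fs_perm]]] := minimal_zero_sum_factorization u_nil u_zs.
have [|t [ss_t [fs' [fs'_size [fs'_min fs'_perm]]]]] := IH _ (perm_refl (flatten ss)).
  by move=> v v_ss; apply: ss_zs; rewrite inE v_ss orbT.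
exists (size fs + t)%N; split; first by rewrite /=; lia.
exists (fs ++ fs'); rewrite size_cat fs'_size flatten_cat; split=> //.
split; first by move=> v; rewrite mem_cat => /orP [/fs_min | /fs'_min].
by apply: (perm_trans B_perm); apply: perm_cat.
Qed.

Lemma has_k_disjoint_zs_intro k (ss : seq (seq G)) rest s :
  (forall u, u \in ss -> u != [::] /\ zero_sum u) ->
  perm_eq s (flatten ss ++ rest) -> (k <= size ss)%N -> has_k_disjoint_zs k s.
Proof.
move=> ss_zs s_perm k_le; exists (take k ss); rewrite size_take_min.
split; first exact/minn_idPl.
split; first by move=> u /mem_take /ss_zs.
by exists (flatten (drop k ss) ++ rest); rewrite catA -flatten_cat cat_take_drop.
Qed.

Lemma has_0_disjoint_zs s : has_k_disjoint_zs 0 s.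
Proof. by exists [::]; split=> //; split=> //; exists s. Qed.

Lemma has_k_disjoint_zs_nil k : (0 < k)%N -> ~ has_k_disjoint_zs k ([::] : seq G).
Proof.
move=> k_gt0 [[|u ss] [ss_size [ss_zs [rest nil_perm]]]]; first by rewrite -ss_size in k_gt0.
have [u_nil _] := ss_zs u (mem_head _ _).
by move: (perm_size nil_perm) u_nil; rewrite /= !size_cat -size_eq0; case: (size u).
Qed.

Lemma has_k_disjoint_zs_catr k s t :
  has_k_disjoint_zs k s -> has_k_disjoint_zs k (s ++ t).
Proof.
move=> [ss [ss_size [ss_zs [rest s_perm]]]].
apply: (has_k_disjoint_zs_intro (rest := rest ++ t) ss_zs); last by rewrite ss_size.
by rewrite catA perm_cat2r.
Qed.

Lemma perm_cons_blocksP x s (ss : seq (seq G)) rest :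
  perm_eq (x :: s) (flatten ss ++ rest) ->
  (exists rest', perm_eq s (flatten ss ++ rest')) \/
  (exists u ss', [/\ perm_eq ss (u :: ss'), x \in u &
                     perm_eq s (rem x u ++ flatten ss' ++ rest)]).
Proof.
move=> s_perm; have := mem_head x s; rewrite (perm_mem s_perm) mem_cat.
case/orP => [/flattenP [u u_ss xu] | x_rest].
  right; exists u, (rem u ss); split=> //; first exact: perm_to_rem.
  rewrite -(perm_cons x); apply: (perm_trans s_perm).
  rewrite -cat_cons catA perm_cat2r.
  apply: (perm_trans (perm_flatten (perm_to_rem u_ss))) => /=.
  by rewrite -cat_cons perm_cat2r; apply: perm_to_rem.
left; exists (rem x rest); rewrite -(perm_cons x); apply: (perm_trans s_perm).
by rewrite perm_sym -cat1s perm_catCA perm_cat2l perm_sym perm_to_rem.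
Qed.

Lemma has_k_disjoint_zs_behead k x s :
  has_k_disjoint_zs k.+1 (x :: s) -> has_k_disjoint_zs k s.
Proof.
move=> [ss [ss_size [ss_zs [rest s_perm]]]].
case: (perm_cons_blocksP s_perm) => [[rest' s_perm'] | [u [ss' [ss_perm _ s_perm']]]].
  by apply: (has_k_disjoint_zs_intro ss_zs s_perm'); rewrite ss_size.
apply: (has_k_disjoint_zs_intro (ss := ss') (rest := rem x u ++ rest)).
- by move=> v v_ss'; apply: ss_zs; rewrite (perm_mem ss_perm) inE v_ss' orbT.
- by apply: (perm_trans s_perm'); rewrite perm_catCA.
- by move: (perm_size ss_perm); rewrite ss_size => -[->].
Qed.

Lemma rem_zero_sum g u : g != 0 -> g \in u -> zero_sum u ->
  rem g u != [::] /\ \sum_(y <- rem g u) y = - g.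
Proof.
move=> g_neq0 g_u; rewrite /zero_sum (big_rem _ g_u) /= addrC addr_eq0 => /eqP sum_rem.
split=> //; apply: contraNneq g_neq0 => rem0.
by rewrite -oppr_eq0 -sum_rem rem0 big_nil.
Qed.

Lemma has_k_disjoint_zs_double k g s : g + g = 0 -> g != 0 ->
  has_k_disjoint_zs k.+1 (g :: g :: s) -> has_k_disjoint_zs k s.
Proof.
move=> gg g_neq0 [ss [ss_size [ss_zs [rest s_perm]]]].
case: (perm_cons_blocksP s_perm) => [[rest' s_perm'] | [u [ss' [ss_perm g_u s_perm']]]].
  by apply: (has_k_disjoint_zs_behead (x := g)); exists ss; split=> //; split=> //; exists rest'.
have ss'_size : size ss' = k by move: (perm_size ss_perm); rewrite ss_size => -[].
have ss'_zs v : v \in ss' -> v != [::] /\ zero_sum v.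
  by move=> v_ss'; apply: ss_zs; rewrite (perm_mem ss_perm) inE v_ss' orbT.
have [_ u_zs] : u != [::] /\ zero_sum u.
  by apply: ss_zs; rewrite (perm_mem ss_perm) mem_head.
have : perm_eq (g :: s) (flatten ss' ++ rem g u ++ rest).
  by apply: (perm_trans s_perm'); rewrite perm_catCA.
case/perm_cons_blocksP => [[rest' s_perm''] | [v [ss'' [ss'_perm g_v s_perm'']]]].
  by apply: (has_k_disjoint_zs_intro ss'_zs s_perm''); rewrite ss'_size.
have [_ v_zs] : v != [::] /\ zero_sum v.
  by apply: ss'_zs; rewrite (perm_mem ss'_perm) mem_head.
have [u'_nil u'_sum] := rem_zero_sum g_neq0 g_u u_zs.
have [_ v'_sum] := rem_zero_sum g_neq0 g_v v_zs.
apply: (has_k_disjoint_zs_intro (ss := (rem g u ++ rem g v) :: ss'') (rest := rest)).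
- move=> w; rewrite inE => /orP [/eqP -> | w_ss''].
    split; first by apply: contra u'_nil; rewrite -!size_eq0 size_cat addn_eq0 => /andP [].
    by rewrite /zero_sum big_cat /= u'_sum v'_sum -opprD gg oppr0.
  by apply: ss'_zs; rewrite (perm_mem ss'_perm) inE w_ss'' orbT.
- apply: (perm_trans s_perm'') => /=.
  by rewrite -!catA perm_sym perm_catCA perm_cat2l perm_catCA.
- by move: (perm_size ss'_perm); rewrite ss'_size /= => ->.
Qed.

End ZeroSumSequences.

Definition forces_disjoint_zs (G : zmodType) k l :=
  forall s : seq G, (l <= size s)%N -> has_k_disjoint_zs k s.

Section DavenportConstants.
Variable G : zmodType.
Hypothesis forces_ex : forall k, exists l, forces_disjoint_zs G k l.

Lemma Dk_forces k : forces_disjoint_zs G k (Dk G k).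
Proof. by have [] := cmin_spec (forces_ex k). Qed.

Lemma Dk_min k l : forces_disjoint_zs G k l -> (Dk G k <= l)%N.
Proof. by have [_] := cmin_spec (forces_ex k); apply. Qed.

Lemma Dk0 : Dk G 0 = 0%N.
Proof.
have forces0 : forces_disjoint_zs G 0 0 by move=> s _; apply: has_0_disjoint_zs.
by have [_ /(_ _ forces0)] := cmin_spec (ex_intro _ 0%N forces0); rewrite leqn0 => /eqP.
Qed.

Lemma Dk_gt0 k : (0 < k)%N -> (0 < Dk G k)%N.
Proof.
move=> k_gt0; rewrite lt0n; apply/eqP => Dk_eq0.
by apply: (has_k_disjoint_zs_nil k_gt0); apply: Dk_forces; rewrite Dk_eq0.
Qed.

Lemma Dk_extremal k l : (l < Dk G k)%N ->
  exists s : seq G, size s = l /\ ~ has_k_disjoint_zs k s.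
Proof.
move=> l_lt; apply: contrapT => no_ext.
suff /Dk_min : forces_disjoint_zs G k l by rewrite leqNgt l_lt.
move=> s l_le; rewrite -(cat_take_drop l s); apply: has_k_disjoint_zs_catr.
apply: contrapT => not_has; apply: no_ext; exists (take l s).
by rewrite size_take_min; split=> //; apply/minn_idPl.
Qed.

Lemma Dk_addn2 k (g : G) : g + g = 0 -> g != 0 -> (0 < k)%N ->
  (Dk G k + 2 <= Dk G k.+1)%N.
Proof.
move=> gg g_neq0 k_gt0.
have [|s [s_size not_has]] := @Dk_extremal k (Dk G k).-1.
  by rewrite prednK ?Dk_gt0.
rewrite leqNgt; apply/negP => lt; apply: not_has.
apply: (has_k_disjoint_zs_double gg g_neq0); apply: Dk_forces => /=.
by move: (Dk_gt0 k_gt0); rewrite s_size; lia.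
Qed.

(* The k blocks found among the first D_k terms leave a nonempty zero-sum
   remainder. *)
Lemma zero_sum_split k (B : seq G) : zero_sum B -> (Dk G k < size B)%N ->
  exists ss : seq (seq G), size ss = k.+1 /\
    (forall u, u \in ss -> u != [::] /\ zero_sum u) /\ perm_eq B (flatten ss).
Proof.
move=> B_zs B_size.
have [|ss [ss_size [ss_zs [rest take_perm]]]] := @Dk_forces k (take (Dk G k) B).
  by rewrite size_take_min leq_min leqnn ltnW.
set R := rest ++ drop (Dk G k) B.
have B_perm : perm_eq B (flatten ss ++ R).
  by rewrite -{1}(cat_take_drop (Dk G k) B) /R catA perm_cat2r.
have R_nil : R != [::].
  by rewrite -size_eq0 -lt0n /R size_cat size_drop addn_gt0 subn_gt0 B_size orbT.
have R_zs : zero_sum R.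
  by apply: (zero_sum_complement B_perm B_zs); apply: zero_sum_flatten => u /ss_zs [].
exists (R :: ss); split; first by rewrite /= ss_size.
split; first by move=> u; rewrite inE => /orP [/eqP -> | /ss_zs].
by apply: (perm_trans B_perm); rewrite /= perm_catC.
Qed.

Lemma in_L_gt K (B B' w : seq G) : (0 < K)%N ->
  perm_eq B (w ++ B') -> w != [::] -> zero_sum w -> zero_sum B' ->
  (Dk G K.-1 < size B')%N -> exists t, (K < t)%N /\ in_L B t.
Proof.
move=> K_gt0 B_perm w_nil w_zs B'_zs B'_size.
have [ss [ss_size [ss_zs B'_perm]]] := zero_sum_split B'_zs B'_size.
have B_wss : perm_eq B (flatten (w :: ss)).
  by apply: (perm_trans B_perm); rewrite /= perm_cat2l.
have [|t [wss_t B_t]] := in_L_flatten B_wss.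
  by move=> u; rewrite inE => /orP [/eqP -> | /ss_zs].
by exists t; split=> //; move: wss_t; rewrite /= ss_size prednK.
Qed.

End DavenportConstants.

Section ElementaryAbelian2.
Variable r : nat.
Implicit Types s u : seq (C2 r).

Lemma C2_addxx (x : C2 r) : x + x = 0.
Proof. by rewrite -mulr2n -scaler_nat (@pchar_Fp_0 2) ?scale0r. Qed.

Lemma size_uniq_C2 s : uniq s -> (size s <= 2 ^ r)%N.
Proof.
have card_C2 : #|C2 r| = (2 ^ r)%N by rewrite card_mx card_Fp // mul1n.
by move/card_uniqP <-; rewrite -card_C2 max_card.
Qed.

Definition C2_unit (i : 'I_r) : C2 r := delta_mx ord0 i.

Lemma C2_unit_neq0 i : C2_unit i != 0.
Proof. by apply/eqP => /matrixP /(_ ord0 i) /eqP; rewrite !mxE !eqxx oner_eq0. Qed.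

Lemma C2_unitD_neq0 i j : i != j -> C2_unit i + C2_unit j != 0.
Proof.
move=> ij; apply/eqP => /matrixP /(_ ord0 i) /eqP.
by rewrite !mxE !eqxx (negbTE ij) addr0 oner_eq0.
Qed.

Lemma forces_C2 k : forces_disjoint_zs (C2 r) k (2 * k + 2 ^ r).
Proof.
elim: k => [|k IH] s s_size; first exact: has_0_disjoint_zs.
have [|x [s' s_perm]] := @perm_dup _ s.
  apply/negP => /size_uniq_C2; apply/negP; rewrite -ltnNge; apply: leq_trans s_size.
  by rewrite -[X in (X < _)%N]add0n ltn_add2r.
have [|ss [ss_size [ss_zs [rest s'_perm]]]] := IH s'.
  by move: s_size; rewrite (perm_size s_perm) /=; lia.
apply: (has_k_disjoint_zs_intro (ss := [:: x; x] :: ss) (rest := rest)).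
- by move=> u; rewrite inE => /orP [/eqP -> | /ss_zs]; rewrite ?zero_sum_pair ?C2_addxx.
- by apply: (perm_trans s_perm); rewrite /= !perm_cons.
- by rewrite /= ss_size.
Qed.

Lemma forces_C2_ex k : exists l, forces_disjoint_zs (C2 r) k l.
Proof. by exists (2 * k + 2 ^ r)%N; apply: forces_C2. Qed.

Lemma Dk_C2_leq k : (Dk (C2 r) k <= 2 * k + 2 ^ r)%N.
Proof. exact/Dk_min/forces_C2/forces_C2_ex. Qed.

(* [:: a] forces a = 0, and [:: a; b] forces b = -a = a. *)
Lemma zero_sum_uniq_size u : uniq u -> (0 : C2 r) \notin u -> u != [::] ->
  zero_sum u -> (3 <= size u)%N.
Proof.
rewrite /zero_sum; case: u => [|a [|b [|c w]]] //= u_uniq u_0 _;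
  rewrite !big_cons big_nil addr0 => /eqP sum0.
  by move: u_0; rewrite sum0 inE eqxx.
have ba : b = a by apply: (addrI a); rewrite sum0 C2_addxx.
by move: u_uniq; rewrite ba inE eqxx.
Qed.

Hypothesis r_gt1 : (1 < r)%N.

Let i0 : 'I_r := Ordinal (ltnW r_gt1).
Let i1 : 'I_r := Ordinal r_gt1.

Lemma Dk1_C2 : (3 <= Dk (C2 r) 1)%N.
Proof.
set a := C2_unit i0; set b := C2_unit i1.
have a_neq0 : a != 0 by apply: C2_unit_neq0.
have b_neq0 : b != 0 by apply: C2_unit_neq0.
have ab_neq0 : a + b != 0 by apply: C2_unitD_neq0.
have not_has : ~ has_k_disjoint_zs 1 [:: a; b].
  move=> [[|u [|? ?]] [//= _ [ss_zs [rest ab_perm]]]].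
  have [u_nil u_zs] := ss_zs u (mem_head _ _).
  move: (perm_size ab_perm); rewrite /= cats0 size_cat.
  case: u u_nil u_zs {ss_zs} ab_perm => [|c [|d [|? ?]]] //= _ u_zs ab_perm ab_size.
    have : c \in [:: a; b] by rewrite (perm_mem ab_perm) /= mem_head.
    move: u_zs; rewrite /zero_sum big_cons big_nil addr0 => /eqP ->.
    by rewrite !inE !(eq_sym 0) (negbTE a_neq0) (negbTE b_neq0).
  have rest0 : rest = [::] by case: rest ab_size {ab_perm}.
  move: ab_perm; rewrite rest0 ?cats0 => /zero_sum_perm.
  rewrite u_zs /zero_sum !big_cons big_nil addr0 => /eqP ab0.
  by rewrite ab0 eqxx in ab_neq0.
rewrite leqNgt; apply/negP => lt; apply: not_has.
by apply: (Dk_forces forces_C2_ex) => /=; lia.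
Qed.

Lemma Dk_C2_addn2 k : (Dk (C2 r) k + 2 <= Dk (C2 r) k.+1)%N.
Proof.
case: k => [|k]; first by rewrite Dk0 add0n; apply: leq_trans Dk1_C2.
by apply: (Dk_addn2 forces_C2_ex (g := C2_unit i0)); rewrite ?C2_addxx ?C2_unit_neq0.
Qed.

Lemma Dk_C2_addn k d : (Dk (C2 r) k + 2 * d <= Dk (C2 r) (k + d))%N.
Proof.
elim: d => [|d IH]; first by rewrite addn0 muln0 addn0.
by rewrite addnS; have := Dk_C2_addn2 (k + d); lia.
Qed.

Lemma Dk_C2_geq k : (2 * k <= Dk (C2 r) k)%N.
Proof. by have := Dk_C2_addn 0 k; rewrite Dk0. Qed.

Lemma zexp_C2 : zexp (C2 r) = 2%N.
Proof.
pose P n := (0 < n)%N /\ forall x : C2 r, x *+ n = 0.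
have P2 : P 2%N by split=> // x; rewrite mulr2n C2_addxx.
have [[n_gt0 n_ann] /(_ _ P2) n_le2] := cmin_spec (ex_intro P 2%N P2).
change (cmin P = 2%N); case: (cmin P) n_gt0 n_ann n_le2 => [|[|[|n]]] //= _ n_ann _.
by have := C2_unit_neq0 i0; rewrite -[C2_unit _]mulr1n n_ann eqxx.
Qed.

Lemma D0_C2 :
  (exists K, forall k, (K <= k)%N -> Dk (C2 r) k = (D0 (C2 r) + 2 * k)%N) /\
  (forall k, (Dk (C2 r) k <= D0 (C2 r) + 2 * k)%N).
Proof.
pose f k := (Dk (C2 r) k - 2 * k)%N.
have f_incr k : (f k <= f k.+1)%N.
  by rewrite /f; have := Dk_C2_addn2 k; have := Dk_C2_geq k; lia.
have f_mono : {homo f : i j / (i <= j)%N} by apply: homo_leq leqnn leq_trans f_incr.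
have f_bounded k : (f k <= 2 ^ r)%N by rewrite /f; have := Dk_C2_leq k; lia.
have [K fK] := nondecreasing_bounded_stationary f_incr f_bounded.
have DkE k : (K <= k)%N -> Dk (C2 r) k = (f K + 2 * k)%N.
  by move=> Kk; rewrite -(fK k Kk) /f subnK ?Dk_C2_geq.
have -> : D0 (C2 r) = f K.
  rewrite /D0 zexp_C2; apply: cmin_uniq => [|d [K' K'_ok]].
    by exists K => k /DkE; rewrite mulnC.
  by have := K'_ok _ (leq_maxr K K'); rewrite DkE ?leq_maxl // mulnC => /addIn.
split; first by exists K.
move=> k; have := f_mono _ _ (leq_maxl k K); rewrite (fK _ (leq_maxr k K)).
by rewrite {1}/f leq_subLR addnC.
Qed.

Lemma Dk_C2_eq_from k : (D0 (C2 r) + 2 * k)%N = Dk (C2 r) k ->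
  forall k', (k <= k')%N -> Dk (C2 r) k' = (D0 (C2 r) + 2 * k')%N.
Proof.
move=> Dk_eq k' kk'; have [_ Dk_le] := D0_C2.
by have := Dk_C2_addn k (k' - k); rewrite subnKC // -Dk_eq; have := Dk_le k'; lia.
Qed.

Lemma kD_C2 :
  [/\ (0 < kD (C2 r))%N,
      Dk (C2 r) (kD (C2 r)) = (D0 (C2 r) + 2 * kD (C2 r))%N &
      forall k, (0 < k)%N -> (D0 (C2 r) + 2 * k)%N = Dk (C2 r) k ->
        (kD (C2 r) <= k)%N].
Proof.
have [[K DkE] _] := D0_C2.
rewrite /kD zexp_C2; set P := fun k0 => _.
have P_ex : exists k0, P k0.
  exists (maxn K 1); split; first by rewrite leq_max orbT.
  by move=> k Kk; rewrite mulnC DkE //; apply: leq_trans (leq_maxl _ _) Kk.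
have [[kD_gt0 kD_ok] kD_min] := cmin_spec P_ex.
split=> // [|k k_gt0 Dk_eq]; first by rewrite kD_ok // mulnC.
by apply: kD_min; split=> // k' kk'; rewrite mulnC (Dk_C2_eq_from Dk_eq).
Qed.

Lemma Dk_C2_jump_kD : (Dk (C2 r) (kD (C2 r)).-1 + 3 <= Dk (C2 r) (kD (C2 r)))%N.
Proof.
have [kD_gt0 DkE kD_min] := kD_C2; have [_ Dk_le] := D0_C2.
case: (kD _) kD_gt0 DkE kD_min => [|[|K]] //= _ DkE kD_min.
  by rewrite Dk0; apply: Dk1_C2.
have Dk_neq : Dk (C2 r) K.+1 <> (D0 (C2 r) + 2 * K.+1)%N.
  by move=> Dk_eq; have := kD_min K.+1 isT (esym Dk_eq); rewrite ltnn.
by have := Dk_le K.+1; rewrite DkE; lia.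
Qed.

End ElementaryAbelian2.

Lemma uniq_C2_of_maxL r K (B : seq (C2 r)) : (0 < K)%N ->
  (Dk (C2 r) K.-1 + 3 <= Dk (C2 r) K)%N -> zero_sum B ->
  (forall t, in_L B t -> (t <= K)%N) -> size B = Dk (C2 r) K ->
  uniq B /\ (0 : C2 r) \notin B.
Proof.
move=> K_gt0 jump B_zs B_L B_size.
have no_long_L w B' : perm_eq B (w ++ B') -> w != [::] -> zero_sum w ->
    (size w <= 2)%N -> False.
  move=> B_perm w_nil w_zs w_size.
  have [|t [Kt B_t]] := in_L_gt (@forces_C2_ex r) K_gt0 B_perm w_nil w_zs
                          (zero_sum_complement B_perm B_zs w_zs).
    move: (perm_size B_perm); rewrite size_cat B_size => DkK.
    by rewrite -(leq_add2l (size w)) -DkK; move: jump w_size; lia.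
  by move: (B_L t B_t); rewrite leqNgt Kt.
split.
  apply/negP => /negP /perm_dup [x [B' B_perm]].
  exact: (no_long_L [:: x; x] B' B_perm) (zero_sum_pair (C2_addxx x)) _.
apply/negP => B_0.
exact: (no_long_L [:: 0] _ (perm_to_rem B_0)) (zero_sum1 _) _.
Qed.

Lemma kD_C2_bound r K : (0 < K)%N ->
  (forall B : seq (C2 r), zero_sum B -> (forall t, in_L B t -> (t <= K)%N) ->
     size B = Dk (C2 r) K -> uniq B /\ (0 : C2 r) \notin B) ->
  (K <= (2 ^ r - 1) %/ 3)%N.
Proof.
move=> K_gt0 maxL_uniq.
have Dk_gt0 := Dk_gt0 (@forces_C2_ex r) K_gt0.
have [|s [s_size not_has]] := @Dk_extremal _ (@forces_C2_ex r) K (Dk (C2 r) K).-1.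
  by rewrite prednK.
set B := (\sum_(y <- s) y) :: s.
have B_zs : zero_sum B by rewrite /zero_sum big_cons C2_addxx.
have B_size : size B = Dk (C2 r) K.
  by rewrite /= s_size prednK.
have B_L t : in_L B t -> (t <= K)%N.
  move=> [fs [fs_size [fs_min B_perm]]]; rewrite leqNgt; apply/negP => Kt.
  apply/not_has/(has_k_disjoint_zs_behead (x := \sum_(y <- s) y)).
  apply: (has_k_disjoint_zs_intro (ss := fs) (rest := [::])); rewrite ?cats0 ?fs_size //.
  by move=> u /fs_min [? []].
have [B_uniq B_0] := maxL_uniq B B_zs B_L B_size.
have [ss [ss_size [ss_zs [rest B_perm]]]] := Dk_forces (@forces_C2_ex r) (eq_leq (esym B_size)).
have flat_uniq : uniq (flatten ss).
  by move: B_uniq; rewrite (perm_uniq B_perm) cat_uniq => /andP [].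
have blocks3 : (3 * size ss <= size (flatten ss))%N.
  apply: leq_size_flatten => u u_ss; have [u_nil u_zs] := ss_zs u u_ss.
  apply: zero_sum_uniq_size u_nil u_zs; first exact: uniq_flatten_mem flat_uniq u_ss.
  apply: contra B_0 => u_0; rewrite (perm_mem B_perm) mem_cat.
  by apply/orP; left; apply/flattenP; exists u.
have B_small : (size B < 2 ^ r)%N by rewrite -[_.+1]/(size (0 :: B)) size_uniq_C2 //= B_0.
have B_large : (3 * K <= size B)%N.
  by rewrite (perm_size B_perm) size_cat -ss_size (leq_trans blocks3) ?leq_addr.
by rewrite leq_divRL // mulnC (leq_trans B_large) // -ltnS subn1 prednK ?expn_gt0.
Qed.

Theorem proposition7p5 (r : nat) (hr : (2 <= r)%N) :
  ((0 < kD (C2 r))%N /\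
   (D0 (C2 r) + 2 * kD (C2 r))%N = Dk (C2 r) (kD (C2 r)) /\
   (forall k : nat, (0 < k)%N -> (D0 (C2 r) + 2 * k)%N = Dk (C2 r) k ->
      (kD (C2 r) <= k)%N)) /\
  (forall B : seq (C2 r), zero_sum B ->
     (forall t, in_L B t -> (t <= kD (C2 r))%N) ->
     size B = Dk (C2 r) (kD (C2 r)) ->
     uniq B /\ (0 : C2 r) \notin B) /\
  (kD (C2 r) <= (2 ^ r - 1) %/ 3)%N.
Proof.
have [kD_gt0 DkE kD_min] := kD_C2 hr.
have maxL_uniq := uniq_C2_of_maxL kD_gt0 (Dk_C2_jump_kD hr).
by split; [split=> //; split | split=> //; apply: kD_C2_bound].
Qed.
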